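(* Let $3\le n\le N$. For every $x$ at which all the functions $\Theta_n,\Lambda_n(\cdot;i,k)$ ($i,k\in\{1,2\}$) are defined at both $x+1$ and $x$ and $\Lambda_n(x+1;1,1)\neq0$, $$\widetilde{\mathcal F}_n(x)\,\Delta\nabla\mathbb K_n(x)+\widetilde{\mathcal G}_n(x)\,\Delta\mathbb K_n(x)+\widetilde{\mathcal H}_n(x)\,\mathbb K_n(x)=0,$$ where $\widetilde{\mathcal F}_n(x)=\mathcal F_n(x+1)$, $\widetilde{\mathcal G}_n(x)=\mathcal G_n(x+1)+\mathcal H_n(x+1)$, $\widetilde{\mathcal H}_n(x)=\mathcal H_n(x+1)$, and $\mathcal F_n(x)=\Theta_n(x)\Theta_n(x-1)$, $\mathcal G_n(x)=\Theta_n(x)\big(\nabla\Theta_n(x)+\Lambda_n(x-1;2,1)+\Lambda_n(x;1,2)\big)-\frac{\nabla\Lambda_n(x;1,1)\,(\Theta_n(x)+\Lambda_n(x;1,2))\Theta_n(x)}{\Lambda_n(x;1,1)}$, $\mathcal H_n(x)=\Theta_n(x)\nabla\Lambda_n(x;2,1)+\Lambda_n(x;1,2)\Lambda_n(x;2,1)-\frac{\nabla\Lambda_n(x;1,1)\,\Lambda_n(x;2,1)(\Theta_n(x)+\Lambda_n(x;1,2))}{\Lambda_n(x;1,1)}-\Lambda_n(x-1;1,1)\Lambda_n(x;2,2)$.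
   Context: Fix an integer $N\ge 1$ and $0<p<1$. Notation: $(a)_0=1$, $(a)_k=a(a+1)\cdots(a+k-1)$ (Pochhammer symbol); $[z]_0=1$, $[z]_k=z(z-1)\cdots(z-k+1)$ (falling factorial). For a function $f$, $\Delta f(x)=f(x+1)-f(x)$, $\nabla f(x)=f(x)-f(x-1)$, $\Delta^0$ is the identity and $\Delta^k=\Delta\circ\Delta^{k-1}$. For $0\le n\le N$ the monic Kravchuk polynomial is $K_n(x)=p^n(-N)_n\sum_{k=0}^{n}\frac{(-n)_k(-x)_k}{(-N)_k\,k!}p^{-k}$, and $K_{-1}=0$; these are monic of degree $n$ and orthogonal on $\{0,\dots,N\}$ with respect to the binomial weight $w(x)=\binom{N}{x}p^x(1-p)^{N-x}$, with $\|K_n\|^2=\sum_{x=0}^N K_n(x)^2w(x)=n!(-N)_np^n(p-1)^n$. They satisfy $xK_n=K_{n+1}+\alpha_nK_n+\beta_nK_{n-1}$ with $\alpha_n=p(N-n)+n(1-p)$, $\beta_n=np(1-p)(N-n+1)$. For $1\le n\le N+1$ and integers $i,l\ge0$, $\mathscr K_{n-1}^{(i,l)}(x,y)=\sum_{k=0}^{n-1}\frac{\Delta^iK_k(x)\,\Delta^lK_k(y)}{\|K_k\|^2}$. Fix $\lambda,\mu>0$ and an integer $j\ge 0$. On real polynomials define $\langle f,g\rangle_{\lambda,\mu}=\sum_{x=0}^N f(x)g(x)w(x)+\lambda\Delta^jf(0)\Delta^jg(0)+\mu\Delta^jf(N)\Delta^jg(N)$. For $0\le n\le N$, $\mathbb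 K_n=\mathbb K_n^{(j)}$ is the monic polynomial of degree $n$ with $\langle\mathbb K_n,q\rangle_{\lambda,\mu}=0$ for all polynomials $q$ of degree $<n$ (Kravchuk–Sobolev polynomials). For $1\le n\le N$: $\mathscr A_n(x,y)=\frac{j!}{\|K_{n-1}\|^2[x-y]_{j+1}}\sum_{k=0}^{j}\frac{\Delta^kK_{n-1}(y)}{k!}[x-y]_k$, $\mathscr B_n(x,y)=-\frac{j!}{\|K_{n-1}\|^2[x-y]_{j+1}}\sum_{k=0}^{j}\frac{\Delta^kK_{n}(y)}{k!}[x-y]_k$; $k_{00}=\mathscr K^{(j,j)}_{n-1}(0,0)$, $k_{0N}=\mathscr K^{(j,j)}_{n-1}(0,N)$, $k_{N0}=\mathscr K^{(j,j)}_{n-1}(N,0)$, $k_{NN}=\mathscr K^{(j,j)}_{n-1}(N,N)$, $d_0=\Delta^jK_n(0)$, $d_N=\Delta^jK_n(N)$, $\delta_n=(1+\lambda k_{00})(1+\mu k_{NN})-\lambda\mu k_{0N}k_{N0}$ (which is nonzero), $\Phi_1(n)=\frac{d_0(1+\mu k_{NN})-\mu k_{0N}d_N}{\delta_n}$, $\Phi_2(n)=\frac{(1+\lambda k_{00})d_N-\lambda k_{N0}d_0}{\delta_n}$; $\mathscr C_{1,n}(x)=1-\lambda\Phi_1(n)\mathscr A_n(x,0)-\mu\Phi_2(n)\mathscr A_n(x,N)$ and $\mathscr D_{1,n}(x)=-\lambda\Phi_1(n)\mathscr B_n(x,0)-\mu\Phi_2(n)\mathscr B_n(x,N)$. For $2\le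 m\le N$ define $\mathscr E_{1,m}(x)=x\nabla\mathscr C_{1,m}(x)+m\,\mathscr C_{1,m}(x-1)-\frac{(m-1)p(N-m+2)\mathscr D_{1,m}(x-1)}{\beta_{m-1}}$ and $\mathscr F_{1,m}(x)=x\nabla\mathscr D_{1,m}(x)+mp(N-m+1)\mathscr C_{1,m}(x-1)+\frac{(m-1)p(N-m+2)(x-\alpha_{m-1})\mathscr D_{1,m}(x-1)}{\beta_{m-1}}+(m-1)\mathscr D_{1,m}(x-1)$. For $3\le n\le N$ define $\mathscr C_{2,n}(x)=-\frac{\mathscr D_{1,n-1}(x)}{\beta_{n-1}}$, $\mathscr D_{2,n}(x)=\mathscr C_{1,n-1}(x)+\mathscr C_{2,n}(x)(\alpha_{n-1}-x)$, $\mathscr E_{2,n}(x)=-\frac{\mathscr F_{1,n-1}(x)}{\beta_{n-1}}$, $\mathscr F_{2,n}(x)=\mathscr E_{1,n-1}(x)+\mathscr E_{2,n}(x)(\alpha_{n-1}-x)$, and $\Theta_n(x)=x\big(\mathscr C_{1,n}(x)\mathscr D_{2,n}(x)-\mathscr C_{2,n}(x)\mathscr D_{1,n}(x)\big)$, $\Lambda_n(x;i,k)=(-1)^k\big(\mathscr E_{k,n}(x)\mathscr D_{i,n}(x)-\mathscr F_{k,n}(x)\mathscr C_{i,n}(x)\big)$ for $i,k\in\{1,2\}$. *)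

From HB Require Import structures.
From mathcomp Require Import all_boot all_order all_algebra.
Set Implicit Arguments. Unset Strict Implicit. Unset Printing Implicit Defensive.
Import Order.TTheory GRing.Theory Num.Theory.
Local Open Scope ring_scope.

Section KS.
Variables (R : realFieldType) (N : nat) (p lam mu : R) (j : nat).

Definition NR : R := N%:R.

Definition poch (a : R) (k : nat) : R := \prod_(i < k) (a + i%:R).
Definition ffall (z : R) (k : nat) : R := \prod_(i < k) (z - i%:R).

Definition fdiff (f : R -> R) : R -> R := fun x => f (x + 1) - f x.
Definition bdiff (f : R -> R) : R -> R := fun x => f x - f (x - 1).
Definition fdiffn (k : nat) (f : R -> R) : R -> R := iter k fdiff f.

(* monic Kravchuk polynomial K_n(x) *)
Definition Kr (n : nat) (x : R) : R :=
  p ^+ n * poch (- NR) n *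
  \sum_(k < n.+1) (poch (- n%:R) k * poch (- x) k / (poch (- NR) k * k`!%:R) * p ^- k).

Definition wt (x : nat) : R := 'C(N, x)%:R * p ^+ x * (1 - p) ^+ (N - x).

Definition normK (n : nat) : R := \sum_(x < N.+1) (Kr n x%:R) ^+ 2 * wt x.

Definition alpha (n : nat) : R := p * (NR - n%:R) + n%:R * (1 - p).
Definition beta (n : nat) : R := n%:R * p * (1 - p) * (NR - n%:R + 1).

(* scrK n i l x y = \mathscr K_{n-1}^{(i,l)}(x,y) *)
Definition scrK (n i l : nat) (x y : R) : R :=
  \sum_(k < n) fdiffn i (Kr k) x * fdiffn l (Kr k) y / normK k.

Definition sob (f g : {poly R}) : R :=
  \sum_(x < N.+1) f.[x%:R] * g.[x%:R] * wt x
  + lam * fdiffn j (horner f) 0 * fdiffn j (horner g) 0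
  + mu * fdiffn j (horner f) NR * fdiffn j (horner g) NR.

Definition isKS (n : nat) (P : {poly R}) : Prop :=
  P \is monic /\ size P = n.+1 /\
  forall q : {poly R}, (size q <= n)%N -> sob P q = 0.

Definition scrA (n : nat) (x y : R) : R :=
  j`!%:R / (normK n.-1 * ffall (x - y) j.+1) *
  \sum_(k < j.+1) fdiffn k (Kr n.-1) y / k`!%:R * ffall (x - y) k.

Definition scrB (n : nat) (x y : R) : R :=
  - (j`!%:R / (normK n.-1 * ffall (x - y) j.+1)) *
  \sum_(k < j.+1) fdiffn k (Kr n) y / k`!%:R * ffall (x - y) k.

Definition k00 (n : nat) : R := scrK n j j 0 0.
Definition k0N (n : nat) : R := scrK n j j 0 NR.
Definition kN0 (n : nat) : R := scrK n j j NR 0.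
Definition kNN (n : nat) : R := scrK n j j NR NR.
Definition d0 (n : nat) : R := fdiffn j (Kr n) 0.
Definition dN (n : nat) : R := fdiffn j (Kr n) NR.

Definition deltaS (n : nat) : R :=
  (1 + lam * k00 n) * (1 + mu * kNN n) - lam * mu * k0N n * kN0 n.
Definition Phi1 (n : nat) : R :=
  (d0 n * (1 + mu * kNN n) - mu * k0N n * dN n) / deltaS n.
Definition Phi2 (n : nat) : R :=
  ((1 + lam * k00 n) * dN n - lam * kN0 n * d0 n) / deltaS n.

Definition C1 (n : nat) (x : R) : R :=
  1 - lam * Phi1 n * scrA n x 0 - mu * Phi2 n * scrA n x NR.
Definition D1 (n : nat) (x : R) : R :=
  - lam * Phi1 n * scrB n x 0 - mu * Phi2 n * scrB n x NR.

Definition E1 (m : nat) (x : R) : R :=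
  x * bdiff (C1 m) x + m%:R * C1 m (x - 1)
  - (m%:R - 1) * p * (NR - m%:R + 2) * D1 m (x - 1) / beta m.-1.
Definition F1 (m : nat) (x : R) : R :=
  x * bdiff (D1 m) x + m%:R * p * (NR - m%:R + 1) * C1 m (x - 1)
  + (m%:R - 1) * p * (NR - m%:R + 2) * (x - alpha m.-1) * D1 m (x - 1) / beta m.-1
  + (m%:R - 1) * D1 m (x - 1).

Definition C2 (n : nat) (x : R) : R := - (D1 n.-1 x / beta n.-1).
Definition D2 (n : nat) (x : R) : R := C1 n.-1 x + C2 n x * (alpha n.-1 - x).
Definition E2 (n : nat) (x : R) : R := - (F1 n.-1 x / beta n.-1).
Definition F2 (n : nat) (x : R) : R := E1 n.-1 x + E2 n x * (alpha n.-1 - x).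

Definition Theta (n : nat) (x : R) : R :=
  x * (C1 n x * D2 n x - C2 n x * D1 n x).

Definition Ci (i n : nat) := if i == 1%N then C1 n else C2 n.
Definition Di (i n : nat) := if i == 1%N then D1 n else D2 n.
Definition Ei (i n : nat) := if i == 1%N then E1 n else E2 n.
Definition Fi (i n : nat) := if i == 1%N then F1 n else F2 n.

Definition Lam (n : nat) (x : R) (i k : nat) : R :=
  (-1) ^+ k * (Ei k n x * Di i n x - Fi k n x * Ci i n x).

Definition Fcal (n : nat) (x : R) : R := Theta n x * Theta n (x - 1).
Definition Gcal (n : nat) (x : R) : R :=
  Theta n x * (bdiff (Theta n) x + Lam n (x - 1) 2 1 + Lam n x 1 2)
  - bdiff (fun t => Lam n t 1 1) x * (Theta n x + Lam n x 1 2) * Theta n x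
    / Lam n x 1 1.
Definition Hcal (n : nat) (x : R) : R :=
  Theta n x * bdiff (fun t => Lam n t 2 1) x + Lam n x 1 2 * Lam n x 2 1
  - bdiff (fun t => Lam n t 1 1) x * Lam n x 2 1 * (Theta n x + Lam n x 1 2)
    / Lam n x 1 1
  - Lam n (x - 1) 1 1 * Lam n x 2 2.

Definition Ftil (n : nat) (x : R) : R := Fcal n (x + 1).
Definition Gtil (n : nat) (x : R) : R := Gcal n (x + 1) + Hcal n (x + 1).
Definition Htil (n : nat) (x : R) : R := Hcal n (x + 1).

(* The only non-constant denominators in the building blocks are the
   falling factorials [t - 0]_{j+1} and [t - N]_{j+1}. *)
Definition nonpole (t : R) : Prop :=
  ffall (t - 0) j.+1 != 0 /\ ffall (t - NR) j.+1 != 0.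
(* Theta_n(t) only evaluates A_m, B_m at t; Lambda_n(t;i,k) at t and t-1. *)
Definition Theta_defined (t : R) : Prop := nonpole t.
Definition Lam_defined (t : R) : Prop := nonpole t /\ nonpole (t - 1).

End KS.

From HB Require Import structures.
From mathcomp Require Import all_boot all_order all_algebra ring lra zify.
Import Order.TTheory GRing.Theory Num.Theory.
Local Open Scope ring_scope.
Set Implicit Arguments. Unset Strict Implicit. Unset Printing Implicit Defensive.

(* Testing the Sobolev orthogonality against K_l
      expresses P = K_n - lam u K^(0,j)(.,0) - mu v K^(0,j)(.,N), where u, v
      are Delta^j P at 0 and N; a positive 2x2 determinant (Cramer's rule)
      identifies u, v with Phi1, Phi2.  Christoffel-Darboux and the inversion
      of the Leibniz rule for Delta^j turn this into the connection formula
      P = C_(1,n) K_n + D_(1,n) K_(n-1).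
   3. Ladder.  Lowering t nabla through the structure relation gives a
      first-order system for P and its companion Q = C_(2,n) K_n + D_(2,n)
      K_(n-1); eliminating Q yields the theorem. *)

Lemma fact_neq0 (R : numDomainType) k : (k`!%:R : R) != 0.
Proof. by rewrite pnatr_eq0 -lt0n fact_gt0. Qed.

(* Discharges the usual side conditions [a != 0] of [field], built from
   products, powers, inverses and nonzero naturals and factorials. *)
Ltac nonzero := rewrite ?nat1r ?natr1; repeat (apply/andP; split);
  rewrite ?expf_neq0 ?mulf_neq0 ?invr_neq0 ?fact_neq0 ?pnatr_eq0 //; try assumption.

Lemma natr_sub_neq0 (R : numDomainType) (a b : nat) : a <> b -> (a%:R - b%:R : R) != 0.
Proof. by move=> H; rewrite subr_eq0 eqr_nat; apply/eqP. Qed.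

Lemma monic_coef_ge (R : nzRingType) (P : {poly R}) n :
  P \is monic -> size P = n.+1 -> forall i, (n <= i)%N -> P`_i = (i == n)%:R.
Proof.
move=> M S i; case: (ltngtP n i) => // H _.
- by rewrite nth_default ?S.
- by subst; move/monicP: M; rewrite lead_coefE S.
Qed.

Section Pochhammer.
Variable R : realFieldType.

Lemma poch0 (a : R) : poch a 0 = 1.
Proof. by rewrite /poch big_ord0. Qed.

Lemma pochS (a : R) k : poch a k.+1 = poch a k * (a + k%:R).
Proof. by rewrite /poch big_ord_recr. Qed.

Lemma pochSl (a : R) k : poch a k.+1 = a * poch (a + 1) k.
Proof.
rewrite /poch big_ord_recl /= addr0; congr (_ * _); apply: eq_bigr => i _.
by rewrite -addrA nat1r.
Qed.

Lemma poch_neg_nat (m k : nat) : (m < k)%N -> poch (- m%:R : R) k = 0.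
Proof. by move=> H; rewrite /poch (bigD1 (Ordinal H)) //= addNr mul0r. Qed.

Lemma poch_nabla (t : R) k :
  t * (poch (- t) k - poch (- (t - 1)) k) = k%:R * poch (- t) k.
Proof.
case: k => [|k]; first by rewrite !poch0 subrr mulr0 mul0r.
rewrite pochSl pochS (_ : - (t - 1) = - t + 1); last by ring.
rewrite -natr1; ring.
Qed.

Lemma poch_mulx (t : R) k :
  t * poch (- t) k = k%:R * poch (- t) k - poch (- t) k.+1.
Proof. rewrite pochS; ring. Qed.

Definition shift (c : nat -> R) (k : nat) : R := if k is k'.+1 then c k' else 0.

Lemma mulx_poch_sum (c : nat -> R) M t : c M = 0 ->
  t * \sum_(k < M.+1) c k * poch (- t) k
  = \sum_(k < M.+1) (k%:R * c k - shift c k) * poch (- t) k.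
Proof.
move=> cM; rewrite mulr_sumr.
under eq_bigr do rewrite mulrCA poch_mulx mulrBr.
under [RHS]eq_bigr do rewrite mulrBl.
rewrite !sumrB; congr (_ - _); first by apply: eq_bigr => k _; ring.
rewrite big_ord_recr /= cM mul0r addr0 [RHS]big_ord_recl /= mul0r add0r.
by apply: eq_bigr.
Qed.

Lemma ffallS (z : R) k : ffall z k.+1 = ffall z k * (z - k%:R).
Proof. by rewrite /ffall big_ord_recr. Qed.

End Pochhammer.

Section FiniteDifferences.
Variable R : realFieldType.
Implicit Types (f g h F G : R -> R).

Lemma fdiffnS k f x : fdiffn k.+1 f x = fdiffn k f (x + 1) - fdiffn k f x.
Proof. by []. Qed.

Lemma fdiffn_ext k f g : (forall x, f x = g x) -> forall x, fdiffn k f x = fdiffn k g x.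
Proof. by move=> H; elim: k => [|k IH] x; rewrite ?fdiffnS ?IH //=. Qed.

Lemma fdiffn_lin2 k f g a b y :
  fdiffn k (fun y => a * f y - b * g y) y = a * fdiffn k f y - b * fdiffn k g y.
Proof. by elim: k y => [|k IH] y //; rewrite !fdiffnS !IH; ring. Qed.

Lemma fdiffn_lin3 k f g h a b y :
  fdiffn k (fun y => f y - a * g y - b * h y) y
  = fdiffn k f y - a * fdiffn k g y - b * fdiffn k h y.
Proof. by elim: k y => [|k IH] y //; rewrite !fdiffnS !IH; ring. Qed.

Lemma fdiffn_linear_factor G t k y :
  fdiffn k (fun y => (t - y) * G y) y
  = (t - y - k%:R) * fdiffn k G y - k%:R * fdiffn k.-1 G y.
Proof.
elim: k y => [|k IH] y; first by rewrite /=; ring.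
rewrite fdiffnS !IH fdiffnS.
case: k IH => [|k] IH; first by rewrite /=; ring.
rewrite (fdiffnS k G y) -!natr1 /=; ring.
Qed.

(* Inverting the Leibniz rule: if (t - y) G(y) = F(y), then Delta^k G is
   expressed through Delta^i F, i <= k, away from the zeros of [t - y]_(k+1). *)
Lemma fdiffn_quotient G F t (HF : forall y, (t - y) * G y = F y) k y :
  ffall (t - y) k.+1 != 0 ->
  fdiffn k G y = k`!%:R / ffall (t - y) k.+1 *
                 \sum_(i < k.+1) fdiffn i F y / i`!%:R * ffall (t - y) i.
Proof.
elim: k => [|k IH] hf.
  rewrite big_ord1 /= -HF.
  rewrite ffallS in hf *; rewrite /ffall big_ord0 in hf *.
  rewrite fact0 /=; field; move: hf; rewrite ?mul1r subr0 => hf; nonzero.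
have hf' := hf; rewrite ffallS mulf_eq0 negb_or in hf'; case/andP: hf' => hf1 hf2.
have P1 : fdiffn k.+1 F y = (t - y - k.+1%:R) * fdiffn k.+1 G y - k.+1%:R * fdiffn k G y.
  by rewrite -(fdiffn_ext k.+1 HF) fdiffn_linear_factor.
have e : fdiffn k.+1 G y = (fdiffn k.+1 F y + k.+1%:R * fdiffn k G y) / (t - y - k.+1%:R).
  by rewrite P1; field; nonzero.
rewrite e (IH hf1) [X in _ = _ * X]big_ord_recr /= (ffallS (t - y) k.+1) factS natrM.
have h3 := @fact_neq0 R k.
field; nonzero.
Qed.

End FiniteDifferences.

(* A positive semidefinite 2x2 Gram matrix [a b; b c] perturbed by
   diag(1/lam, 1/mu) stays invertible: the determinant below is positive. *)
Lemma psd_det_gt0 (R : realFieldType) (a b c lam mu : R) : 0 < lam -> 0 < mu ->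
  (forall s r, 0 <= s ^+ 2 * a + 2 * s * r * b + r ^+ 2 * c) ->
  0 < (1 + lam * a) * (1 + mu * c) - lam * mu * b ^+ 2.
Proof.
move=> lam0 mu0 psd.
have a_ge0 : 0 <= a by have := psd 1 0; rewrite !expr2 !(mul1r, mul0r, mulr0, addr0, mulr1).
have la_gt0 : 0 < 1 + lam * a by rewrite ltr_pwDl // mulr_ge0 // ltW.
have X_ge0 : 0 <= (1 + lam * a) * c - lam * b ^+ 2.
  have lb_ge0 : 0 <= lam * b ^+ 2 by rewrite mulr_ge0 ?sqr_ge0 ?ltW.
  have := psd (lam * b) (- (1 + lam * a)).
  rewrite (_ : _ + _ = (1 + lam * a) * ((1 + lam * a) * c - lam * b ^+ 2) - lam * b ^+ 2);
    last by ring.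
  move=> H; have H' : 0 <= (1 + lam * a) * ((1 + lam * a) * c - lam * b ^+ 2) by lra.
  by rewrite pmulr_rge0 in H'.
have muX_ge0 : 0 <= mu * ((1 + lam * a) * c - lam * b ^+ 2) by rewrite mulr_ge0 // ltW.
by move: la_gt0 X_ge0 muX_ge0; rewrite !expr2 => *; lra.
Qed.

Section Kravchuk.
Variables (R : realFieldType) (N : nat) (p : R).
Hypothesis p_neq0 : p != 0.

Local Notation K := (Kr N p).
Local Notation NN := (N%:R : R).

Lemma pochN_neq0 k : (k <= N)%N -> poch (- NN) k != 0.
Proof.
move=> H; apply/prodf_neq0 => i _.
rewrite addrC subr_eq0 eqr_nat; apply/negP => /eqP E.
move: (ltn_ord i); lia.
Qed.

Definition kcoef (m k : nat) : R :=
  p ^+ m * poch (- NN) m * (poch (- m%:R) k / (poch (- NN) k * k`!%:R) * p ^- k).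

Lemma Kr_sum m t : K m t = \sum_(k < m.+1) kcoef m k * poch (- t) k.
Proof. by rewrite /Kr /NR mulr_sumr; apply: eq_bigr => k _; rewrite /kcoef; ring. Qed.

Lemma kcoef_zero m k : (m < k)%N -> kcoef m k = 0.
Proof. by move=> H; rewrite /kcoef poch_neg_nat // !(mul0r, mulr0). Qed.

Lemma Kr_ext m M t : (m < M)%N -> K m t = \sum_(k < M) kcoef m k * poch (- t) k.
Proof.
elim: M => [//|M IH] H.
case: (ltngtP m M) => H'; [|lia|by subst; rewrite Kr_sum].
by rewrite big_ord_recr /= -IH // kcoef_zero // mul0r addr0.
Qed.

Lemma kcoef_degS m k :
  (k%:R - m.+1%:R) * kcoef m.+1 k = m.+1%:R * p * (NN - m.+1%:R + 1) * kcoef m k.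
Proof.
have pochN_S : poch (- m.+1%:R : R) k * (k%:R - m.+1%:R) = - m.+1%:R * poch (- m%:R) k.
  have := pochS (- m.+1%:R : R) k; rewrite pochSl => E.
  rewrite (_ : - m.+1%:R + 1 = - m%:R :> R) in E; last by rewrite -natr1; ring.
  by rewrite addrC -E.
rewrite /kcoef pochS.
transitivity ((poch (- m.+1%:R : R) k * (k%:R - m.+1%:R)) *
  (p ^+ m.+1 * poch (- NN) m * (- NN + m%:R) / (poch (- NN) k * k`!%:R) * p ^- k)).
  by ring.
rewrite pochN_S exprS -natr1; ring.
Qed.

Lemma kcoef_idxS m k : (k < N)%N ->
  k.+1%:R * p * (NN - k%:R) * kcoef m k.+1 = (m%:R - k%:R) * kcoef m k.
Proof.
move=> kN; rewrite /kcoef !pochS factS natrM exprS.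
have h1 := pochN_neq0 (ltnW kN).
have h2 : (- NN + k%:R) != 0 by rewrite addrC natr_sub_neq0 //; lia.
have h3 := @fact_neq0 R k; have h4 := p_neq0.
field; nonzero.
Qed.

Lemma kcoef_top m : (m < N)%N -> kcoef m.+1 m.+1 = - kcoef m m.
Proof.
move=> mN; rewrite /kcoef.
have h1 := pochN_neq0 (ltnW mN); have h1' := pochN_neq0 mN.
have h3 := @fact_neq0 R m; have h4 := p_neq0.
rewrite [in poch (- m.+1%:R) _]pochSl (_ : - m.+1%:R + 1 = - m%:R :> R);
  last by rewrite -natr1; ring.
rewrite factS natrM exprS; field; nonzero.
Qed.

(* The three-term recurrence, read off on the coefficients of index k <= m. *)
Lemma kcoef_rec m k : (1 <= m)%N -> (m < N)%N -> (k <= m)%N ->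
  k%:R * kcoef m k - shift (kcoef m) k
  = kcoef m.+1 k + alpha N p m * kcoef m k + beta N p m * kcoef m.-1 k.
Proof.
case: m => [//|m] _ mN km.
have hp := p_neq0.
have hk1 : (k%:R - m.+2%:R : R) != 0 by apply: natr_sub_neq0; lia.
have hNm : (NN - m.+1%:R + 1) != 0 by rewrite -natrB ?natr1 ?pnatr_eq0 //; lia.
have ha : (m.+1%:R * p * (NN - m.+1%:R + 1)) != 0 by rewrite !mulf_neq0 ?pnatr_eq0.
have E1 : kcoef m.+2 k = m.+2%:R * p * (NN - m.+2%:R + 1) * kcoef m.+1 k / (k%:R - m.+2%:R).
  by rewrite -kcoef_degS mulrC mulKf.
have E2 : kcoef m k = (k%:R - m.+1%:R) * kcoef m.+1 k / (m.+1%:R * p * (NN - m.+1%:R + 1)).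
  by rewrite kcoef_degS mulrC mulKf.
have E3 : shift (kcoef m.+1) k
          = k%:R * p * (NN - k%:R + 1) * kcoef m.+1 k / (m.+1%:R - k%:R + 1).
  case: k km {hk1 E1 E2} => [|k] km; first by rewrite /= !mul0r.
  rewrite /= (_ : NN - k.+1%:R + 1 = NN - k%:R); last by rewrite -natr1; ring.
  rewrite (_ : m.+1%:R - k.+1%:R + 1 = m.+1%:R - k%:R :> R); last by rewrite -[k.+1%:R]natr1; ring.
  have hmk : (m.+1%:R - k%:R : R) != 0 by apply: natr_sub_neq0; lia.
  by rewrite kcoef_idxS; [rewrite mulrC mulKf | lia].
have hd : (m.+1%:R - k%:R + 1 : R) != 0 by rewrite -natrB ?natr1 ?pnatr_eq0 //; lia.
rewrite E1 E2 E3 /= /alpha /beta /NR.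
move: hk1 hNm hd; rewrite -!natr1 => hk1 hNm hd.
field; by rewrite hNm hp hk1 hd natr1 pnatr_eq0.
Qed.

Lemma Kr0 t : K 0 t = 1.
Proof.
by rewrite Kr_sum big_ord1 /kcoef !poch0 !expr0 /= fact0 !(mul1r, mulr1, invr1, divr1).
Qed.

Lemma Kr1 t : (0 < N)%N -> K 1 t = t - alpha N p 0.
Proof.
move=> N0; have hN : NN != 0 by rewrite pnatr_eq0 -lt0n.
have hp := p_neq0.
rewrite Kr_sum !big_ord_recr big_ord0 /= add0r /kcoef /alpha /NR.
rewrite !poch0 !pochS !poch0 /= fact0 (_ : 1`!%:R = 1 :> R) //.
by field; rewrite hp hN.
Qed.

Lemma Kr_rec m t : (m < N)%N ->
  t * K m t = K m.+1 t + alpha N p m * K m t + beta N p m * K m.-1 t.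
Proof.
case: m => [|m] mN.
  by rewrite /= Kr0 Kr1 // /beta !mul0r; ring.
have e1 := @Kr_ext m.+1 m.+3 t (ltnW (ltnSn _)).
have e2 := @Kr_ext m m.+3 t (ltnW (ltnW (ltnSn _))).
rewrite e1 e2 /= Kr_sum mulx_poch_sum ?kcoef_zero //.
rewrite !mulr_sumr -!big_split /=; apply: eq_bigr => k _.
have [km|km] := leqP k m.+1; first by rewrite kcoef_rec //; ring.
have -> : (k : nat) = m.+2 by move: (ltn_ord k) km; lia.
by rewrite /= (kcoef_top mN) (@kcoef_zero m.+1 m.+2) // (@kcoef_zero m m.+2) //; ring.
Qed.

Lemma Kr_struct m t :
  t * (K m.+1 t - K m.+1 (t - 1))
  = m.+1%:R * K m.+1 t + m.+1%:R * p * (NN - m.+1%:R + 1) * K m t.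
Proof.
rewrite !Kr_sum -sumrB mulr_sumr.
transitivity (\sum_(k < m.+2) k%:R * kcoef m.+1 k * poch (- t) k).
  by apply: eq_bigr => k _; rewrite -mulrBr mulrCA poch_nabla; ring.
rewrite !mulr_sumr big_ord_recr /= [X in _ = X + _]big_ord_recr /=.
rewrite -addrA [_ * (_ * _) + _]addrC addrA -big_split /=; congr (_ + _); last by ring.
apply: eq_bigr => k _.
rewrite (_ : k%:R * kcoef m.+1 k
  = m.+1%:R * kcoef m.+1 k + (k%:R - m.+1%:R) * kcoef m.+1 k); last by ring.
rewrite kcoef_degS; ring.
Qed.

End Kravchuk.

Section KravchukOrthogonality.
Variables (R : realFieldType) (N : nat) (p : R).
Hypotheses (p_gt0 : 0 < p) (p_lt1 : p < 1).

Local Notation K := (Kr N p).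
Local Notation NN := (N%:R : R).
Local Notation w := (wt N p).
Let p_neq0 : p != 0 := lt0r_neq0 p_gt0.

(* The second-order difference operator of which the K_m are eigenfunctions. *)
Definition kop (f : R -> R) (t : R) : R :=
  p * (NN - t) * (f (t + 1) - f t) - (1 - p) * t * (f t - f (t - 1)).

Lemma kop_poch (t : R) k :
  kop (fun s => poch (- s) k) t
  = - (k%:R * poch (- t) k) - k%:R * p * (NN - k%:R + 1) * poch (- t) k.-1.
Proof.
rewrite /kop.
have H := poch_nabla t k.
have -> : (1 - p) * t * (poch (- t) k - poch (- (t - 1)) k)
   = (1 - p) * (t * (poch (- t) k - poch (- (t - 1)) k)) by ring.
rewrite H.
case: k H => [|k] H; first by rewrite !poch0; ring.
rewrite pochSl (_ : - (t + 1) + 1 = - t); last by ring.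
rewrite /= pochS -natr1; ring.
Qed.

Lemma kop_sum (f : R -> R) n (g : nat -> R) (h : nat -> R -> R) t :
  (forall s, f s = \sum_(k < n) g k * h k s) ->
  kop f t = \sum_(k < n) g k * kop (h k) t.
Proof.
move=> E; rewrite /kop !E -!sumrB !mulr_sumr -sumrB.
by apply: eq_bigr => k _; ring.
Qed.

Lemma Kr_eig m t : (m <= N)%N -> kop (K m) t = - m%:R * K m t.
Proof.
move=> mN.
rewrite (@kop_sum _ m.+1 (kcoef N p m) (fun k s => poch (- s) k)) => [|s]; last exact: Kr_sum.
under eq_bigr do rewrite kop_poch.
transitivity (\sum_(k < m.+1) - (k%:R * kcoef N p m k * poch (- t) k)
   - \sum_(k < m.+1) k%:R * p * (NN - k%:R + 1) * kcoef N p m k * poch (- t) k.-1).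
  by rewrite -sumrB; apply: eq_bigr => k _; ring.
rewrite [X in _ - X = _]big_ord_recl /= !mul0r add0r.
rewrite big_ord_recr /= Kr_sum big_ord_recr /= mulrDr.
rewrite addrAC; congr (_ + _); last by ring.
rewrite mulr_sumr -sumrB; apply: eq_bigr => i _.
rewrite (_ : NN - (bump 0 i)%:R + 1 = NN - i%:R); last by rewrite /bump /= add1n -natr1; ring.
have H := @kcoef_idxS R N p p_neq0 m i (leq_trans (ltn_ord i) mN).
rewrite /bump /= add1n.
rewrite (_ : i.+1%:R * p * (NN - i%:R) * kcoef N p m i.+1 * poch (- t) i
   = (i.+1%:R * p * (NN - i%:R) * kcoef N p m i.+1) * poch (- t) i) // H; ring.
Qed.

Lemma wt_shift x : (x < N)%N ->
  p * (NN - x%:R) * w x = (1 - p) * x.+1%:R * w x.+1.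
Proof.
move=> xN.
have E : ((N - x) * 'C(N, x))%N = (x.+1 * 'C(N, x.+1))%N
  by rewrite -mul_bin_down mul_bin_diag.
rewrite /wt -natrB; last by lia.
have E2 : (N - x = (N - x.+1).+1)%N by lia.
rewrite E2 in E *; rewrite exprS [p ^+ x.+1]exprS.
transitivity (p * (1 - p) * p ^+ x * (1 - p) ^+ (N - x.+1)
              * (((N - x.+1).+1)%:R * 'C(N, x)%:R)); first by ring.
rewrite -natrM E natrM; ring.
Qed.

(* Summation by parts: the operator kop is symmetric for the weight w. *)
Lemma kop_by_parts (f g : R -> R) :
  \sum_(x < N.+1) kop f x%:R * g x%:R * w x
  = \sum_(x < N) - ((1 - p) * x.+1%:R * w x.+1
                    * (f x.+1%:R - f x%:R) * (g x.+1%:R - g x%:R)).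
Proof.
rewrite /kop.
transitivity (\sum_(x < N.+1) p * (NN - x%:R) * (f (x%:R + 1) - f x%:R) * g x%:R * w x
   - \sum_(x < N.+1) (1 - p) * x%:R * (f x%:R - f (x%:R - 1)) * g x%:R * w x).
  by rewrite -sumrB; apply: eq_bigr => x _; ring.
rewrite big_ord_recr /= subrr !(mulr0, mul0r) addr0.
rewrite big_ord_recl /= !(mulr0, mul0r) add0r -sumrB.
apply: eq_bigr => x _.
rewrite /bump /= add1n natr1.
rewrite (_ : x.+1%:R - 1 = x%:R :> R); last by rewrite -natr1; ring.
transitivity ((p * (NN - x%:R) * w x) * (f x.+1%:R - f x%:R) * g x%:R
  - (1 - p) * x.+1%:R * (f x.+1%:R - f x%:R) * g x.+1%:R * w x.+1); first by ring.
rewrite wt_shift //; ring.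
Qed.

Lemma kop_selfadj (f g : R -> R) :
  \sum_(x < N.+1) kop f x%:R * g x%:R * w x = \sum_(x < N.+1) kop g x%:R * f x%:R * w x.
Proof. by rewrite !kop_by_parts; apply: eq_bigr => x _; ring. Qed.

Definition kip (a b : nat) : R := \sum_(x < N.+1) K a x%:R * K b x%:R * w x.

Lemma kip_sym a b : kip a b = kip b a.
Proof. by apply: eq_bigr => x _; ring. Qed.

Lemma normK_kip m : normK N p m = kip m m.
Proof. by apply: eq_bigr => x _; rewrite expr2. Qed.

(* Orthogonality, from the self-adjointness of kop and distinct eigenvalues. *)
Lemma Kr_orth a b : (a <= N)%N -> (b <= N)%N -> a != b -> kip a b = 0.
Proof.
move=> aN bN ab.
have kop_K (c d : nat) : (c <= N)%N ->
    \sum_(x < N.+1) kop (K c) x%:R * K d x%:R * w x = - c%:R * kip c d.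
  by move=> cN; rewrite /kip mulr_sumr; apply: eq_bigr => x _; rewrite Kr_eig //; ring.
have E := kop_selfadj (K a) (K b).
rewrite !kop_K // (kip_sym b a) in E.
have hab : (a%:R - b%:R : R) != 0 by apply: natr_sub_neq0 => H; rewrite H eqxx in ab.
apply: (mulfI hab); rewrite mulr0.
by apply/eqP; rewrite mulrBl subr_eq0 -eqr_opp -!mulNr E.
Qed.

Lemma normK0 : normK N p 0 = 1.
Proof.
rewrite /normK; under eq_bigr do rewrite Kr0 expr1n mul1r.
transitivity ((1 - p + p) ^+ N); last by rewrite subrK expr1n.
by rewrite exprDn; apply: eq_bigr => i _; rewrite /wt -mulr_natl; ring.
Qed.

Lemma kip_mulx a b : (b < N)%N ->
  \sum_(x < N.+1) x%:R * K a x%:R * K b x%:R * w x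
  = kip a b.+1 + alpha N p b * kip a b + beta N p b * kip a b.-1.
Proof.
move=> bN; rewrite /kip !mulr_sumr -!big_split /=; apply: eq_bigr => x _.
rewrite (_ : x%:R * K a x%:R * K b x%:R = K a x%:R * (x%:R * K b x%:R)); last by ring.
by rewrite (Kr_rec p_neq0) //; ring.
Qed.

Lemma normK_rec m : (m.+1 < N)%N -> normK N p m.+1 = beta N p m.+1 * normK N p m.
Proof.
move=> mN.
have T1 := @kip_mulx m.+1 m (ltnW mN).
have T2 := @kip_mulx m m.+1 mN.
rewrite (@Kr_orth m.+1 m) ?(@Kr_orth m.+1 m.-1) in T1; try lia.
rewrite (@Kr_orth m m.+2) ?(@Kr_orth m m.+1) in T2; try lia.
have E : \sum_(x < N.+1) x%:R * K m.+1 x%:R * K m x%:R * w x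
       = \sum_(x < N.+1) x%:R * K m x%:R * K m.+1 x%:R * w x.
  by apply: eq_bigr => x _; ring.
rewrite !normK_kip.
transitivity (\sum_(x < N.+1) x%:R * K m.+1 x%:R * K m x%:R * w x); first by rewrite T1; ring.
by rewrite E T2; ring.
Qed.

Lemma beta_gt0 m : (0 < m)%N -> (m <= N)%N -> 0 < beta N p m.
Proof.
move=> m0 mN; rewrite /beta /NR.
rewrite -natrB // natr1 !mulr_gt0 ?ltr0n ?subr_gt0 //; lia.
Qed.

Lemma normK_gt0 m : (m < N)%N -> 0 < normK N p m.
Proof.
elim: m => [|m IH] mN; first by rewrite normK0.
rewrite normK_rec // mulr_gt0 ?IH ?beta_gt0 //; lia.
Qed.

Lemma normK_neq0 m : (m < N)%N -> normK N p m != 0.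
Proof. by move=> H; rewrite gt_eqF ?normK_gt0. Qed.

Lemma Kr_fourier m (q : {poly R}) (a : nat -> R) : (m <= N.+1)%N ->
  (forall t, q.[t] = \sum_(k < m) a k * K k t) ->
  forall l : 'I_m, \sum_(x < N.+1) q.[x%:R] * K l x%:R * w x = a l * normK N p l.
Proof.
move=> mN Ha l.
under eq_bigr do rewrite Ha.
transitivity (\sum_(x < N.+1) \sum_(k < m) a k * (K k x%:R * K l x%:R * w x)).
  by apply: eq_bigr => x _; rewrite !big_distrl; apply: eq_bigr => k _ /=; ring.
rewrite exchange_big /= (bigD1 l) //= [X in _ + X]big1 ?addr0.
  by rewrite normK_kip /kip mulr_sumr.
move=> k kl; have kn := ltn_ord k; have ln := ltn_ord l.
by rewrite -mulr_sumr -/(kip k l) Kr_orth ?mulr0 //; lia.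
Qed.

End KravchukOrthogonality.

Section KravchukPolynomials.
Variables (R : realFieldType) (N : nat) (p : R).
Hypothesis p_neq0 : p != 0.

Local Notation K := (Kr N p).

Fixpoint Kpair (m : nat) : {poly R} * {poly R} :=
  if m is m'.+1 then
    (('X - (alpha N p m')%:P) * (Kpair m').1 - (beta N p m')%:P * (Kpair m').2,
     (Kpair m').1)
  else (1, 0).
Definition Kpoly m := (Kpair m).1.

Lemma Kpair_horner m t : (m <= N)%N ->
  (Kpoly m).[t] = K m t /\ beta N p m * (Kpair m).2.[t] = beta N p m * K m.-1 t.
Proof.
elim: m => [|m IH] mN; first by rewrite /Kpoly /= hornerC Kr0 /beta !mul0r.
have [IH1 IH2] := IH (ltnW mN).
split; last by rewrite /Kpoly /= IH1.
rewrite /Kpoly /= hornerD hornerN !hornerM hornerXsubC !hornerC -/(Kpoly m) IH1 IH2.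
have E := Kr_rec p_neq0 t mN.
rewrite (_ : K m.+1 t = t * K m t - alpha N p m * K m t - beta N p m * K m.-1 t);
  last by rewrite E; ring.
ring.
Qed.

Lemma Kpoly_horner m t : (m <= N)%N -> (Kpoly m).[t] = K m t.
Proof. by move=> H; case: (Kpair_horner t H). Qed.

Lemma Kpair_monic m :
  Kpoly m \is monic /\ size (Kpoly m) = m.+1 /\ (size (Kpair m).2 <= m)%N.
Proof.
elim: m => [|m [IH1 [IH2 IH3]]]; first by rewrite /Kpoly /= monic1 size_poly1 size_poly0.
rewrite /Kpoly /= -/(Kpoly m).
have s1 : size (('X - (alpha N p m)%:P) * Kpoly m) = m.+2.
  by rewrite size_monicM ?monicXsubC ?monic_neq0 // size_XsubC IH2.
have m1 : ('X - (alpha N p m)%:P) * Kpoly m \is monic by rewrite monicMl ?monicXsubC.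
have s2 : (size (- ((beta N p m)%:P * (Kpair m).2))%R < m.+2)%N.
  rewrite size_polyN mul_polyC (leq_ltn_trans (size_scale_leq _ _)) //.
  exact: leq_ltn_trans IH3 _.
split; last split; last by rewrite IH2.
- by rewrite monicE lead_coefDl ?s1 // -monicE.
- by rewrite size_polyDl s1.
Qed.

Lemma Kr_basis m (q : {poly R}) : (m <= N.+1)%N -> (size q <= m)%N ->
  exists a : nat -> R, forall t, q.[t] = \sum_(k < m) a k * K k t.
Proof.
elim: m q => [|m IH] q mN sq.
  exists (fun _ => 0) => t; move: sq; rewrite leqn0 size_poly_eq0 => /eqP ->.
  by rewrite horner0 big_ord0.
have [KM [KS _]] := Kpair_monic m.
set c := q`_m.
have sq' : (size (q - c *: Kpoly m)%R <= m)%N.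
  apply/leq_sizeP => i mi; rewrite coefB coefZ (monic_coef_ge KM KS) //.
  case: (ltngtP m i) mi => // H _.
  - by rewrite nth_default ?mulr0 ?subr0 //; apply: leq_trans sq _.
  - by subst; rewrite mulr1 subrr.
have [a Ha] := IH _ (ltnW mN) sq'.
exists (fun k => if k == m then c else a k) => t.
rewrite big_ord_recr /= eqxx (_ : q = (q - c *: Kpoly m) + c *: Kpoly m); last by rewrite subrK.
rewrite hornerD hornerZ Ha Kpoly_horner //; congr (_ + _).
by apply: eq_bigr => i _; rewrite (ltn_eqF (ltn_ord i)).
Qed.

End KravchukPolynomials.

Section KravchukSobolev.
Variables (R : realFieldType) (N : nat) (p lam mu : R) (j : nat).
Hypotheses (p_gt0 : 0 < p) (p_lt1 : p < 1) (lam_gt0 : 0 < lam) (mu_gt0 : 0 < mu).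

Local Notation K := (Kr N p).
Local Notation NN := (N%:R : R).
Local Notation w := (wt N p).
Local Notation scrK := (scrK N p).
Let p_neq0 : p != 0 := lt0r_neq0 p_gt0.

Lemma fdiffn_scrK_x n k l y t : fdiffn k (fun t => scrK n 0 l t y) t = scrK n k l t y.
Proof.
elim: k t => [|k IH] t //; rewrite fdiffnS !IH /scrK -sumrB.
by apply: eq_bigr => i _; rewrite fdiffnS; ring.
Qed.

Lemma fdiffn_scrK_y n k t y : fdiffn k (fun y => scrK n 0 0 t y) y = scrK n 0 k t y.
Proof.
elim: k y => [|k IH] y //; rewrite fdiffnS !IH /scrK -sumrB.
by apply: eq_bigr => i _; rewrite fdiffnS; ring.
Qed.

Lemma scrK_sym n i a b : scrK n i i a b = scrK n i i b a.
Proof. by apply: eq_bigr => k _; ring. Qed.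

Lemma christoffel_darboux m t y : (m < N)%N ->
  (t - y) * scrK m.+1 0 0 t y = (K m.+1 t * K m y - K m t * K m.+1 y) / normK N p m.
Proof.
elim: m => [|m IH] mN.
  rewrite /scrK big_ord1 /= !Kr0 normK0 !Kr1 //; first by rewrite invr1; ring.
rewrite /scrK big_ord_recr /= -/(scrK m.+1 0 0 t y) mulrDr IH; last by lia.
have e1 := Kr_rec p_neq0 t mN; have e2 := Kr_rec p_neq0 y mN.
rewrite (_ : K m.+2 t = t * K m.+1 t - alpha N p m.+1 * K m.+1 t - beta N p m.+1 * K m t);
  last by rewrite e1; ring.
rewrite (_ : K m.+2 y = y * K m.+1 y - alpha N p m.+1 * K m.+1 y - beta N p m.+1 * K m y);
  last by rewrite e2; ring.
have h1 := normK_neq0 p_gt0 p_lt1 (ltnW mN).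
have h2 : beta N p m.+1 != 0 by rewrite gt_eqF // beta_gt0 //; lia.
by rewrite (normK_rec p_gt0 p_lt1) //; field; rewrite h1 h2.
Qed.

Lemma scrK_AB n t y : (1 <= n)%N -> (n <= N)%N -> ffall (t - y) j.+1 != 0 ->
  scrK n 0 j t y = scrA N p j n t y * K n t + scrB N p j n t y * K n.-1 t.
Proof.
move=> n1 nN hf.
have hh : normK N p n.-1 != 0 by apply: normK_neq0 => //; lia.
rewrite -fdiffn_scrK_y.
rewrite (@fdiffn_quotient _ (fun y => scrK n 0 0 t y)
   (fun y => (K n t / normK N p n.-1) * K n.-1 y - (K n.-1 t / normK N p n.-1) * K n y) t) //;
  last by case: n n1 nN hf hh => [//|n] _ nN _ hh z; rewrite christoffel_darboux //; field.
under eq_bigr do rewrite fdiffn_lin2.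
rewrite /scrA /scrB.
set h := normK N p n.-1 in hh *; clearbody h.
rewrite !mulr_sumr !mulr_suml -big_split /=.
by apply: eq_bigr => i _; field; nonzero.
Qed.

Section SobolevPolynomial.
Variables (n : nat) (P : {poly R}).
Hypotheses (nN : (n <= N)%N) (HP : isKS N p lam mu j n P).

Local Notation u := (fdiffn j (horner P) 0).
Local Notation v := (fdiffn j (horner P) NN).

Lemma KS_moment l : (l < n)%N ->
  \sum_(x < N.+1) P.[x%:R] * K l x%:R * w x
  = - (lam * u * fdiffn j (K l) 0 + mu * v * fdiffn j (K l) NN).
Proof.
move=> ln; have [_ [_ orthP]] := HP.
have [_ [sKl _]] := Kpair_monic N p l.
have lN : (l <= N)%N by lia.
have := orthP (Kpoly N p l); rewrite sKl /sob /NR => /(_ ln).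
rewrite !(fdiffn_ext j (fun y => Kpoly_horner p_neq0 y lN)).
under eq_bigr do rewrite (Kpoly_horner p_neq0 _ lN).
by move=> E; apply/eqP; rewrite -subr_eq0 opprK addrA E.
Qed.

Lemma KS_expand t :
  P.[t] = K n t - lam * u * scrK n 0 j t 0 - mu * v * scrK n 0 j t NN.
Proof.
have [Pm [Ps _]] := HP.
have [KM [KS _]] := Kpair_monic N p n.
have sq : (size (P - Kpoly N p n)%R <= n)%N.
  apply/leq_sizeP => i ni.
  by rewrite coefB (monic_coef_ge Pm Ps) // (monic_coef_ge KM KS) // subrr.
have [a Ha] := Kr_basis p_neq0 (leqW nN) sq.
have coef_a (l : 'I_n) :
    a l = - (lam * u * fdiffn j (K l) 0 + mu * v * fdiffn j (K l) NN) / normK N p l.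
  have hl := normK_neq0 p_gt0 p_lt1 (leq_trans (ltn_ord l) nN).
  rewrite -(KS_moment (ltn_ord l)) -[a l](mulfK hl).
  rewrite -(Kr_fourier p_gt0 p_lt1 (leqW nN) Ha l); congr (_ / _).
  under eq_bigr do rewrite hornerD hornerN (Kpoly_horner p_neq0) //.
  have lN : (l <= N)%N by apply: ltnW; apply: leq_trans nN.
  have nl : n != l by rewrite eq_sym ltn_eqF.
  transitivity (\sum_(x < N.+1) P.[x%:R] * K l x%:R * w x - kip N p n l).
    by rewrite /kip -sumrB; apply: eq_bigr => x _; ring.
  by rewrite (@Kr_orth _ N _ p_gt0 p_lt1 n l) // subr0.
have -> : P.[t] = (P - Kpoly N p n).[t] + K n t.
  by rewrite hornerD hornerN (Kpoly_horner p_neq0) // addrNK.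
rewrite Ha /scrK addrC -addrA; congr (_ + _).
rewrite !mulr_sumr -!sumrN -big_split /=.
by apply: eq_bigr => k _; rewrite coef_a; ring.
Qed.

Lemma deltaS_gt0 : 0 < deltaS N p lam mu j n.
Proof.
rewrite /deltaS /k00 /k0N /kN0 /kNN /NR (scrK_sym _ _ NN) -mulrA -expr2.
apply: psd_det_gt0 => // s r.
set a := scrK n j j 0 0; set b := scrK n j j 0 NN; set c := scrK n j j NN NN.
have -> : s ^+ 2 * a + 2 * s * r * b + r ^+ 2 * c
  = \sum_(k < n) (s * fdiffn j (K k) 0 + r * fdiffn j (K k) NN) ^+ 2 / normK N p k.
  by rewrite /a /b /c /scrK !mulr_sumr -!big_split /=; apply: eq_bigr => k _; ring.
apply: sumr_ge0 => k _; rewrite divr_ge0 ?sqr_ge0 // ltW // normK_gt0 //.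
by move: (ltn_ord k); lia.
Qed.

(* The boundary data of P solve a 2x2 linear system with determinant
   deltaS; Cramer's rule gives Phi1, Phi2. *)
Lemma KS_boundary : u = Phi1 N p lam mu j n /\ v = Phi2 N p lam mu j n.
Proof.
have DP y : fdiffn j (horner P) y
    = fdiffn j (K n) y - (lam * u) * scrK n j j y 0 - (mu * v) * scrK n j j y NN.
  rewrite (fdiffn_ext j (f := horner P) KS_expand) fdiffn_lin3.
  by rewrite !fdiffn_scrK_x.
have e0 : fdiffn j (K n) 0 = u + lam * u * scrK n j j 0 0 + mu * v * scrK n j j 0 NN.
  by rewrite {1}(DP 0); ring.
have eN : fdiffn j (K n) NN = v + lam * u * scrK n j j NN 0 + mu * v * scrK n j j NN NN.
  by rewrite {1}(DP NN); ring.
have hd : deltaS N p lam mu j n != 0 by rewrite gt_eqF // deltaS_gt0.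
split; [rewrite /Phi1 -[u](mulfK hd) | rewrite /Phi2 -[v](mulfK hd)]; congr (_ / _);
  by rewrite /deltaS /d0 /dN /k00 /k0N /kN0 /kNN /NR e0 eN; ring.
Qed.

Lemma KS_connection t : (1 <= n)%N -> nonpole N j t ->
  P.[t] = C1 N p lam mu j n t * K n t + D1 N p lam mu j n t * K n.-1 t.
Proof.
move=> n1 [h0 hN]; rewrite KS_expand.
have [-> ->] := KS_boundary.
by rewrite /NR in hN; rewrite !scrK_AB // /C1 /D1 /NR; ring.
Qed.

End SobolevPolynomial.
End KravchukSobolev.

(* Eliminating Q from the first-order system
     T1 (P1 - P0) = - B1 P1 + A1 Q1,   T0 (P0 - Pm) = - B0 P0 + A0 Q0,
     T1 (Q1 - Q0) = D1 P1 - C1 Q1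
   gives a second-order relation between P1, P0 and Pm. *)
Lemma first_order_elimination (R : fieldType) (T1 T0 A1 A0 B1 B0 C1 D1 P1 P0 Pm Q1 Q0 : R) :
  A1 != 0 ->
  T1 * (P1 - P0) = - B1 * P1 + A1 * Q1 ->
  T0 * (P0 - Pm) = - B0 * P0 + A0 * Q0 ->
  T1 * (Q1 - Q0) = D1 * P1 - C1 * Q1 ->
  let H := T1 * (B1 - B0) + C1 * B1 - (A1 - A0) * B1 * (T1 + C1) / A1 - A0 * D1 in
  let G := T1 * (T1 - T0 + B0 + C1) - (A1 - A0) * (T1 + C1) * T1 / A1 in
  T1 * T0 * ((P1 - P0) - (P0 - Pm)) + (G + H) * (P1 - P0) + H * P0 = 0.
Proof.
move=> hA eP1 eP0 eQ H G; rewrite /H /G {H G}.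
have eQ1 : Q1 = (T1 * (P1 - P0) + B1 * P1) / A1 by rewrite eP1; field.
have eQ0 : T1 * Q0 = T1 * Q1 - D1 * P1 + C1 * Q1.
  by transitivity (T1 * Q1 - T1 * (Q1 - Q0)); [ring | rewrite eQ; ring].
have eP0' : T1 * (T0 * (P0 - Pm)) = T1 * (- B0 * P0) + A0 * (T1 * Q0) by rewrite eP0; ring.
rewrite (_ : T1 * T0 * ((P1 - P0) - (P0 - Pm)) = T1 * T0 * (P1 - P0) - T1 * (T0 * (P0 - Pm)));
  last by ring.
by rewrite eP0' eQ0 eQ1; field.
Qed.

Section Ladder.
Variables (R : realFieldType) (N : nat) (p lam mu : R) (j : nat).
Hypotheses (p_gt0 : 0 < p) (p_lt1 : p < 1) (lam_gt0 : 0 < lam) (mu_gt0 : 0 < mu).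

Local Notation K := (Kr N p).
Local Notation NN := (N%:R : R).
Let p_neq0 : p != 0 := lt0r_neq0 p_gt0.

(* Lowering: t nabla (c K_(m+2) + d K_(m+1)) is again a combination of
   K_(m+2) and K_(m+1), with the coefficients of E_(1,m+2) and F_(1,m+2). *)
Lemma nabla_combination m (c d : R -> R) t : (m.+2 <= N)%N ->
  t * ((c t * K m.+2 t + d t * K m.+1 t)
       - (c (t - 1) * K m.+2 (t - 1) + d (t - 1) * K m.+1 (t - 1)))
  = (t * bdiff c t + m.+2%:R * c (t - 1)
      - (m.+2%:R - 1) * p * (NN - m.+2%:R + 2) * d (t - 1) / beta N p m.+1) * K m.+2 t
  + (t * bdiff d t + m.+2%:R * p * (NN - m.+2%:R + 1) * c (t - 1)
      + (m.+2%:R - 1) * p * (NN - m.+2%:R + 2) * (t - alpha N p m.+1) * d (t - 1)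
        / beta N p m.+1
      + (m.+2%:R - 1) * d (t - 1)) * K m.+1 t.
Proof.
move=> mN.
have s1 := Kr_struct N p m.+1 t.
have s2 := Kr_struct N p m t.
have r := Kr_rec p_neq0 t (mN : (m.+1 < N)%N); rewrite /= in r.
have hb : beta N p m.+1 != 0 by rewrite gt_eqF // beta_gt0 //; lia.
have e1 : t * K m.+2 (t - 1) = t * K m.+2 t
   - (m.+2%:R * K m.+2 t + m.+2%:R * p * (NN - m.+2%:R + 1) * K m.+1 t) by rewrite -s1; ring.
have e2 : t * K m.+1 (t - 1) = t * K m.+1 t
   - (m.+1%:R * K m.+1 t + m.+1%:R * p * (NN - m.+1%:R + 1) * K m t) by rewrite -s2; ring.
have e3 : K m t = (t * K m.+1 t - K m.+2 t - alpha N p m.+1 * K m.+1 t) / beta N p m.+1.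
  by rewrite r; field.
transitivity (c t * (t * K m.+2 t) - c (t - 1) * (t * K m.+2 (t - 1))
   + d t * (t * K m.+1 t) - d (t - 1) * (t * K m.+1 (t - 1))); first by ring.
by rewrite e1 e2 e3 /bdiff -!natr1; field.
Qed.

Definition companion (n : nat) (t : R) : R :=
  C2 N p lam mu j n t * K n t + D2 N p lam mu j n t * K n.-1 t.

Lemma companion_eq m t : (m.+3 <= N)%N ->
  companion m.+3 t
  = C1 N p lam mu j m.+2 t * K m.+2 t + D1 N p lam mu j m.+2 t * K m.+1 t.
Proof.
move=> mN; have hb : beta N p m.+2 != 0 by rewrite gt_eqF // beta_gt0 //; lia.
rewrite /companion /D2 /C2 /= (_ : K m.+1 t = (t * K m.+2 t - K m.+3 t
  - alpha N p m.+2 * K m.+2 t) / beta N p m.+2); first by field.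
by rewrite (Kr_rec p_neq0 t (mN : (m.+2 < N)%N)) /=; field.
Qed.

Lemma companion_nabla m t : (m.+3 <= N)%N ->
  t * (companion m.+3 t - companion m.+3 (t - 1))
  = E2 N p lam mu j m.+3 t * K m.+3 t + F2 N p lam mu j m.+3 t * K m.+2 t.
Proof.
move=> mN; have hb : beta N p m.+2 != 0 by rewrite gt_eqF // beta_gt0 //; lia.
rewrite !companion_eq // nabla_combination ?(ltnW mN) //.
rewrite (_ : K m.+1 t = (t * K m.+2 t - K m.+3 t - alpha N p m.+2 * K m.+2 t)
  / beta N p m.+2); last by rewrite (Kr_rec p_neq0 t (mN : (m.+2 < N)%N)) /=; field.
have hb1 : beta N p m.+1 != 0 by rewrite gt_eqF // beta_gt0 //; lia.
by rewrite /F2 /E2 /E1 /F1 /NR /=; field; rewrite hb hb1.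
Qed.

Section SobolevLadder.
Variables (n : nat) (P : {poly R}).
Hypotheses (n_ge3 : (3 <= n)%N) (nN : (n <= N)%N) (HP : isKS N p lam mu j n P).

Local Notation Q := (companion n).
Local Notation Th := (Theta N p lam mu j n).
Local Notation La := (Lam N p lam mu j n).

Lemma KS_nabla t : nonpole N j t -> nonpole N j (t - 1) ->
  t * (P.[t] - P.[t - 1])
  = E1 N p lam mu j n t * K n t + F1 N p lam mu j n t * K n.-1 t.
Proof.
move=> h1 h2; rewrite !(KS_connection p_gt0 p_lt1 lam_gt0 mu_gt0 nN HP) //; try lia.
case: n n_ge3 nN HP => [|[|[|m]]] // _ mN _.
by rewrite /E1 /F1 /NR /= nabla_combination.
Qed.

(* Solving the two expansions for K_n, K_(n-1) (determinant Theta / t) yields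
   a first-order difference system for the pair (P, Q). *)
Lemma KS_first_order t : nonpole N j t -> nonpole N j (t - 1) ->
  Th t * (P.[t] - P.[t - 1]) = - La t 2 1 * P.[t] + La t 1 1 * Q t.
Proof.
move=> h1 h2.
rewrite (_ : Th t * _ = (C1 N p lam mu j n t * D2 N p lam mu j n t
  - C2 N p lam mu j n t * D1 N p lam mu j n t) * (t * (P.[t] - P.[t - 1])));
  last by rewrite /Theta; ring.
rewrite KS_nabla // (KS_connection p_gt0 p_lt1 lam_gt0 mu_gt0 nN HP) //; last by lia.
by rewrite /Lam /companion /Ei /Di /Fi /Ci /=; ring.
Qed.

Lemma companion_first_order t : nonpole N j t ->
  Th t * (Q t - Q (t - 1)) = La t 2 2 * P.[t] - La t 1 2 * Q t.
Proof.
move=> h1.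
rewrite (_ : Th t * _ = (C1 N p lam mu j n t * D2 N p lam mu j n t
  - C2 N p lam mu j n t * D1 N p lam mu j n t) * (t * (Q t - Q (t - 1))));
  last by rewrite /Theta; ring.
have -> : t * (Q t - Q (t - 1))
        = E2 N p lam mu j n t * K n t + F2 N p lam mu j n t * K n.-1 t.
  by case: n n_ge3 nN HP => [|[|[|m]]] // _ mN _; rewrite companion_nabla.
rewrite (KS_connection p_gt0 p_lt1 lam_gt0 mu_gt0 nN HP) //; last by lia.
by rewrite /Lam /companion /Ei /Di /Fi /Ci /=; ring.
Qed.

End SobolevLadder.

End Ladder.

Theorem mainTheorem8 (R : realFieldType) (N : nat) (p lam mu : R) (j n : nat)
    (P : {poly R}) (x : R) :
  0 < p -> p < 1 -> 0 < lam -> 0 < mu -> (3 <= n)%N -> (n <= N)%N ->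
  isKS N p lam mu j n P ->
  Theta_defined N j (x + 1) -> Theta_defined N j x ->
  Lam_defined N j (x + 1) -> Lam_defined N j x ->
  Lam N p lam mu j n (x + 1) 1 1 != 0 ->
  Ftil N p lam mu j n x * fdiff (bdiff (horner P)) x
  + Gtil N p lam mu j n x * fdiff (horner P) x
  + Htil N p lam mu j n x * P.[x] = 0.
Proof.
move=> p0 p1 l0 m0 n3 nN HP h1 h0 _ [_ hm] hA.
have h1' : nonpole N j (x + 1 - 1) by rewrite addrK.
have eP1 := KS_first_order p0 p1 l0 m0 n3 nN HP h1 h1'.
have eP0 := KS_first_order p0 p1 l0 m0 n3 nN HP h0 hm.
have eQ := companion_first_order p0 p1 l0 m0 n3 nN HP h1.
rewrite addrK in eP1 eQ.
move: (first_order_elimination hA eP1 eP0 eQ) => /= <-.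
by rewrite /Ftil /Gtil /Htil /Fcal /Gcal /Hcal /fdiff /bdiff /= !addrK; ring.
Qed.
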